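(* Let $c>0$ be a constant. There is a constant $C>0$ (depending only on $c$) such that the following holds. Let $Q$ be a set of at most $n$ integers, each of absolute value at most $2^{cn}$, and let $1\le k\le |Q|$ be such that $\left|w\left(\binom{Q}{k}\right)\right|\ge |w(2^Q)|/|Q|$. Let $X$ be a real number with $4\le X\le |w(2^Q)|$ and let $p$ be a uniformly random prime in $[X/2,X]$. Then with probability at least $9/10$ over the choice of $p$, \[\left|\left\{a\in\mathbb{Z}_p \colon \text{there exists } M'\subseteq Q,\ |M'|=k,\ w(M')\equiv a \pmod p\right\}\right|\ \ge\ \frac{p}{C n^2}.\]
   Context: For a finite set of integers $S$, $w(S)=\sum_{a\in S}a$; $2^S$ is the set of all subsets of $S$; $\binom{S}{k}$ is the set of all $k$-element subsets of $S$; for a family $\mathcal F$ of sets, $w(\mathcal F)=\{w(A)\colon A\in\mathcal F\}$ (a set of distinct integers). $\mathbb Z_p$ is the set of residues modulo $p$. *)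

From mathcomp Require Import all_boot all_order all_algebra.
From mathcomp Require Import reals exp.
Set Implicit Arguments. Unset Strict Implicit. Unset Printing Implicit Defensive.
Import Order.TTheory GRing.Theory Num.Theory.
Local Open Scope ring_scope.

(* A finite set Q of integers is represented by a duplicate-free list;
   its subsets are the index sets A : {set 'I_(size Q)}. *)

Definition wsub (Q : seq int) (A : {set 'I_(size Q)}) : int :=
  \sum_(i in A) Q`_i.

Definition wpow (Q : seq int) : seq int :=
  undup [seq wsub A | A : {set 'I_(size Q)}].

Definition wbinom (Q : seq int) (k : nat) : seq int :=
  undup [seq wsub A | A in [pred A : {set 'I_(size Q)} | #|A| == k]].

(* { a in Z_p : exists M' subset Q, |M'| = k, w(M') = a mod p },
   residues represented by their canonical representatives in [0, p) *)
Definition kres (Q : seq int) (k p : nat) : seq int :=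
  undup [seq (wsub A %% p%:Z)%Z | A in [pred A : {set 'I_(size Q)} | #|A| == k]].

Definition primes_in (R : realType) (X : R) : seq nat :=
  [seq p <- iota 0 (Num.truncn X).+1 |
     prime p && (X / 2 <= p%:R) && (p%:R <= X)].

(* Write M for the integer part of X and a for M %/ 2, and let D n^2 be the
   scale of the target density. If X <= 2 D n^2 every residue count is at least
   1 >= p / (2 D n^2). Otherwise take m = M %/ (D n^2) + 1 distinct k-subset
   sums, which exist because |w(binom Q k)| >= |w(2^Q)| / |Q| >= X / n. Two of
   them differ by a nonzero integer below 2^(K n), which has at most K n / log a
   prime factors >= a. Summing over the primes of [X/2, X], at most a tenth of
   them identify more than m/2 pairs of these sums (Markov), and every other
   prime sees at least m/2 >= p / (2 D n^2) residues. The count "a tenth"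
   uses that [X/2, X] contains at least a / (6 log a) primes, which follows from
   Erdős's estimate of the central binomial coefficient 'C(2a, a). *)

From mathcomp Require Import all_boot all_order all_algebra.
From mathcomp Require Import reals exp.
From mathcomp Require Import zify ring.
Set Implicit Arguments. Unset Strict Implicit. Unset Printing Implicit Defensive.
Import Order.TTheory GRing.Theory Num.Theory.

(** * Primes in (a, 2a] *)

Lemma sum_binomial n : \sum_(i < n.+1) 'C(n, i) = 2 ^ n.
Proof.
rewrite -[2]/(1 + 1) expnDn.
by apply: eq_bigr => i _; rewrite !exp1n !muln1.
Qed.

Lemma bin_mid_odd_le m : 'C(m.*2.+1, m) <= 4 ^ m.
Proof.
have sym : 'C(m.*2.+1, m.+1) = 'C(m.*2.+1, m).
  by rewrite -bin_sub; [congr 'C(_, _) | ]; lia.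
have pair_le : 'C(m.*2.+1, m) + 'C(m.*2.+1, m.+1) <= 2 ^ m.*2.+1.
  rewrite -sum_binomial -(big_mkord predT) (@big_cat_nat _ _ _ m) /=; [|lia|lia].
  rewrite (@big_cat_nat _ _ _ m.+2 m) /=; [|lia|lia].
  rewrite (@big_cat_nat _ _ _ m.+1 m) /=; [|lia|lia].
  by rewrite !big_nat1; lia.
rewrite sym expnS in pair_le.
rewrite -[4]/(2 ^ 2) -expnM mulnC muln2; lia.
Qed.

Lemma prime_dvd_fact p n : prime p -> p %| n`! -> p <= n.
Proof.
move=> pp; rewrite fact_prod Euclid_dvd_prod // big_has => /hasP [i].
by rewrite mem_index_iota => /andP [i1 i2] /dvdn_leq; lia.
Qed.

Lemma prod_primes_dvd (r : seq nat) (P : pred nat) N :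
  uniq r -> (forall p, p \in r -> P p -> prime p /\ p %| N) ->
  \prod_(p <- r | P p) p %| N.
Proof.
elim: r => [|x r IH] /=; first by rewrite big_nil dvd1n.
move=> /andP [xr ur] rP; rewrite big_cons.
have IHr := IH ur (fun p pr Pp => rP p (mem_behead (s := x :: r) pr) Pp).
case Px: (P x) => //.
have [px dx] := rP x (mem_head _ _) Px.
rewrite Gauss_dvd ?dx ?IHr // prime_coprime // Euclid_dvd_prod // big_has_cond.
apply/hasP => [[y yr /andP [Py]]].
have [py _] := rP y (mem_behead (s := x :: r) yr) Py.
by rewrite dvdn_prime2 // => /eqP exy; subst y; rewrite yr in xr.
Qed.

Definition primorial x := \prod_(0 <= p < x.+1 | prime p) p.

Lemma primorial_split m n : m <= n ->
  primorial n = primorial m * \prod_(m.+1 <= p < n.+1 | prime p) p.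
Proof. by move=> h; rewrite /primorial (@big_cat_nat _ _ _ m.+1) //=; lia. Qed.

(* Every prime in (m+1, 2m+1] divides (2m+1)! but neither m! nor (m+1)!. *)
Lemma prod_primes_dvd_bin_mid m :
  \prod_(m.+2 <= p < m.*2.+2 | prime p) p %| 'C(m.*2.+1, m).
Proof.
apply: prod_primes_dvd; first exact: iota_uniq.
move=> p; rewrite mem_index_iota => /andP [h1 h2] pp; split => //.
have := @bin_fact m.*2.+1 m ltac:(lia); rewrite (_ : m.*2.+1 - m = m.+1); last by lia.
move=> fact_eq.
have : p %| (m.*2.+1)`! by apply: dvdn_fact; lia.
rewrite -fact_eq Gauss_dvdl // prime_coprime // Euclid_dvdM //.
by apply/negP => /orP [] /(prime_dvd_fact pp); lia.
Qed.

Lemma primorial_le x : primorial x <= 4 ^ x.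
Proof.
elim/ltn_ind: x => x IH.
have x_eq := odd_double_half x; set m := x./2 in x_eq.
case: (ltnP x 3) => x_small.
  by case: x x_small {IH x_eq m} => [|[|[|x]]] // _; rewrite /primorial unlock.
case: (odd x) x_eq => /= x_eq.
- have m_lt : m.+1 <= x by lia.
  rewrite (primorial_split m_lt).
  have -> : 4 ^ x = 4 ^ m.+1 * 4 ^ m by rewrite -expnD; congr (_ ^ _); lia.
  apply: leq_mul; first by apply: IH; lia.
  apply: leq_trans (bin_mid_odd_le m).
  apply: dvdn_leq; first by rewrite bin_gt0; lia.
  by rewrite -x_eq add1n; apply: prod_primes_dvd_bin_mid.
- have x_npr : prime x = false.
    apply/negP => px; have : 2 %| x by rewrite -x_eq add0n dvdn2 odd_double.
    by rewrite dvdn_prime2 // => /eqP ex; rewrite -ex in x_small.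
  rewrite (@primorial_split x.-1) ?leq_pred // (_ : x.-1.+1 = x); last by lia.
  rewrite big_mkcond big_nat1 /= x_npr muln1.
  by apply: leq_trans (IH x.-1 _) _; [lia | apply: leq_pexp2l; lia].
Qed.

Lemma logn_fact_widen p a : prime p ->
  logn p a`! = \sum_(1 <= k < a.*2.+1) a %/ p ^ k.
Proof.
move=> pp; rewrite logn_fact // (@big_cat_nat _ _ _ a.+1 1 a.*2.+1) /=; [|lia|lia].
rewrite [X in _ + X]big1_seq ?addn0 // => k /andP [_].
rewrite mem_index_iota => /andP [k_gt _]; apply: divn_small.
by apply: leq_trans (ltn_expl k (prime_gt1 pp)); lia.
Qed.

Lemma divn_double a q : 0 < q -> a.*2 %/ q = (a %/ q).*2 + (a %% q).*2 %/ q.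
Proof.
by move=> q0; rewrite {1}(divn_eq a q) doubleD -!mul2n mulnA divnMDl.
Qed.

Lemma logn_central_binom p a : prime p ->
  logn p 'C(a.*2, a) = \sum_(1 <= k < a.*2.+1) (a %% p ^ k).*2 %/ p ^ k.
Proof.
move=> pp.
have := @bin_fact a.*2 a ltac:(lia); rewrite (_ : a.*2 - a = a); last by lia.
move=> fact_eq.
have : logn p (a.*2)`! = logn p 'C(a.*2, a) + (logn p a`! + logn p a`!).
  by rewrite -fact_eq !lognM ?fact_gt0 ?bin_gt0 ?muln_gt0 ?fact_gt0 //; lia.
rewrite [logn p (a.*2)`!]logn_fact // !logn_fact_widen // -!big_split /=.
under eq_bigr => k _ do rewrite divn_double ?expn_gt0 ?prime_gt0 // -addnn.
by rewrite big_split /=; lia.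
Qed.

Lemma double_mod_div_le1 a q : 0 < q -> (a %% q).*2 %/ q <= 1.
Proof. by move=> q0; rewrite -ltnS ltn_divLR //; have := ltn_pmod a q0; lia. Qed.

Lemma double_mod_div_small a q : a.*2 < q -> (a %% q).*2 %/ q = 0.
Proof. by move=> h; apply: divn_small; have := leq_mod a q; lia. Qed.

Lemma sum1_nat_bounded m N T (P : pred nat) :
  (forall k, m <= k < N -> P k -> k < T) ->
  \sum_(m <= k < N | P k) 1 <= minn (N - m) (T - m).
Proof.
elim: N => [|N IH] bound; first by rewrite big_geq.
case: (leqP m N) => hmN; last by rewrite big_geq //; lia.
rewrite big_mkcond big_nat_recr //= -big_mkcond.
have := IH (fun k hk => bound k ltac:(lia)).
by case PN: (P N) => /=; [have := bound N ltac:(lia) PN | rewrite addn0]; lia.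
Qed.

Lemma logn_central_binom_le_trunc_log p a : prime p -> 0 < a ->
  logn p 'C(a.*2, a) <= trunc_log p a.*2.
Proof.
move=> pp a0; rewrite logn_central_binom //.
apply: leq_trans (_ : _ <= \sum_(1 <= k < a.*2.+1 | p ^ k <= a.*2) 1) _.
  rewrite [X in _ <= X]big_mkcond /=; apply: leq_sum => k _.
  have q0 : 0 < p ^ k by rewrite expn_gt0 prime_gt0.
  by case: ifP => h; [apply: double_mod_div_le1 | rewrite double_mod_div_small //; lia].
apply: leq_trans (sum1_nat_bounded (T := (trunc_log p a.*2).+1) _) _; last lia.
by move=> k _ hk; rewrite ltnS; apply: trunc_log_max => //; apply: prime_gt1.
Qed.

Lemma expn_logn_central_binom_le p a : prime p -> 0 < a ->
  p ^ logn p 'C(a.*2, a) <= a.*2.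
Proof.
move=> pp a0; apply: leq_trans (trunc_logP (prime_gt1 pp) (_ : 0 < a.*2)); last lia.
by apply: leq_pexp2l; [apply: prime_gt0 | apply: logn_central_binom_le_trunc_log].
Qed.

Lemma logn_central_binom_le1 p a : prime p -> 0 < a -> a.*2 < p * p ->
  logn p 'C(a.*2, a) <= 1.
Proof.
move=> pp a0 h; apply: leq_trans (logn_central_binom_le_trunc_log pp a0) _.
rewrite -ltnS -(ltn_exp2l _ _ (prime_gt1 pp)).
by apply: leq_ltn_trans (trunc_logP (prime_gt1 pp) _) _; rewrite ?expnS ?expn1; lia.
Qed.

(* Only k = 1 could contribute, and then (a mod p) = a - p with 2(a - p) < p. *)
Lemma logn_central_binom_eq0 p a : prime p -> a.*2 < p * p -> a.*2 < 3 * p ->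
  p <= a -> logn p 'C(a.*2, a) = 0.
Proof.
move=> pp h1 h2 h3; rewrite logn_central_binom //; apply: big1_seq => k /andP [_].
rewrite mem_index_iota => /andP [k1 _].
case: (ltnP k 2) => hk.
  have -> : k = 1 by lia.
  rewrite expn1 (_ : a %% p = a - p); first by apply: divn_small; lia.
  by rewrite -[in LHS](subnK h3) modnDr modn_small //; lia.
apply: double_mod_div_small; apply: leq_trans h1 _.
by have := leq_pexp2l (prime_gt0 pp) hk; rewrite expnS expn1.
Qed.

Lemma central_binom_lb a : 4 ^ a <= a.*2.+1 * 'C(a.*2, a).
Proof.
elim: a => [|a IH]; first by rewrite bin0.
have rec1 := mul_bin_diag a.*2.+1 a.
have rec2 := mul_bin_diag a.*2.+2 a.
have sym : 'C(a.*2.+1, a.+1) = 'C(a.*2.+1, a).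
  by rewrite -bin_sub; [congr 'C(_, _) | ]; lia.
rewrite /= sym in rec1; rewrite /= in rec2.
rewrite (_ : a.+1.*2 = a.*2.+2); last by lia.
move: IH rec1 rec2; set x := 'C(a.*2, a); set y := 'C(a.*2.+1, a).
set z := 'C(a.*2.+2, a.+1); rewrite expnS => IH rec1 rec2.
have z_eq : z = 2 * y by nia.
nia.
Qed.

(* Erdős's bound for p ^ logn p 'C(2a, a) in his proof of Bertrand's postulate. *)
Definition erdos_factor a p :=
  (if prime p && (p * p <= a.*2) then a.*2 else 1) *
  (if prime p && (3 * p <= a.*2) then p else 1) *
  (if prime p && (a < p) then a.*2 else 1).

Lemma pfactor_central_binom_le a p : 0 < a ->
  p ^ logn p 'C(a.*2, a) <= erdos_factor a p.
Proof.
move=> a0; rewrite /erdos_factor.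
case pp: (prime p) => /=; last by rewrite lognE pp.
have p0 := prime_gt0 pp; have le2a := expn_logn_central_binom_le pp a0.
case: ifP => sq.
  rewrite -mulnA; apply: leq_trans le2a (leq_pmulr _ _).
  by rewrite muln_gt0; apply/andP; split; case: ifP => //; lia.
case: ifP => third; last first.
  case: ifP => upper; first by rewrite !mul1n.
  by rewrite logn_central_binom_eq0 //; lia.
rewrite ifF ?mul1n ?muln1; last by apply/negP => h; nia.
have := logn_central_binom_le1 pp a0 (_ : a.*2 < p * p).
by case: (logn p _) => [|[|]] //; lia.
Qed.

Lemma prod_pfactor_range n N : 0 < n -> (forall p, prime p -> p %| n -> p <= N) ->
  n = \prod_(0 <= p < N.+1) p ^ logn p n.
Proof.
move=> n0 hN; rewrite -{1}(partnT n0).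
rewrite (widen_partn _ (leq_maxl n N)).
rewrite (@big_cat_nat _ _ _ N.+1) //=; last by rewrite ltnS leq_maxr.
rewrite [X in _ * X]big1_seq ?muln1 => [|p /andP [_]]; first exact: eq_bigl.
rewrite mem_index_iota => /andP [hp _].
by rewrite lognE; case: and3P => // [[pp _ pd]]; have := hN p pp pd; lia.
Qed.

Lemma central_binom_le_prod a : 0 < a ->
  'C(a.*2, a) <= \prod_(0 <= p < a.*2.+1) erdos_factor a p.
Proof.
move=> a0; rewrite {1}(@prod_pfactor_range 'C(a.*2, a) a.*2); last 2 first.
- by rewrite bin_gt0; lia.
- move=> p pp pd; apply: prime_dvd_fact pp (dvdn_trans pd _).
  by rewrite -(@bin_fact a.*2 a) ?dvdn_mulr //; lia.
by apply: leq_prod => p _; apply: pfactor_central_binom_le.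
Qed.

Lemma prod_if_const (r : seq nat) (P : pred nat) c :
  \prod_(p <- r) (if P p then c else 1) = c ^ (\sum_(p <- r | P p) 1).
Proof. by rewrite expn_sum -big_mkcond /=; apply: eq_bigr => p _; rewrite expn1. Qed.

Lemma prod_primes_third_le a :
  \prod_(0 <= p < a.*2.+1) (if prime p && (3 * p <= a.*2) then p else 1)
    <= primorial (a.*2 %/ 3).
Proof.
rewrite /primorial (@big_cat_nat _ _ _ (a.*2 %/ 3).+1 0 a.*2.+1) //=; last first.
  by rewrite ltnS leq_div.
rewrite [X in _ * X]big1_seq ?muln1; last first.
  move=> p /andP [_]; rewrite mem_index_iota => /andP [hp _].
  case: ifP => // /andP [_ hp3].
  have : p <= a.*2 %/ 3 by rewrite leq_divRL //; lia.
  lia.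
rewrite [X in _ <= X]big_mkcond /= big_nat_cond [X in _ <= X]big_nat_cond.
apply: leq_prod => p /andP [/andP [_ hp] _].
by case: (prime p) => //=; rewrite ifT // mulnC -leq_divRL.
Qed.

Definition nprimes_sqrt a := \sum_(0 <= p < a.*2.+1 | prime p && (p * p <= a.*2)) 1.
Definition nprimes_upper a := \sum_(0 <= p < a.*2.+1 | prime p && (a < p)) 1.

Lemma central_binom_erdos_le a : 0 < a ->
  4 ^ a <= a.*2.+1 * (a.*2 ^ nprimes_sqrt a * 4 ^ (a.*2 %/ 3) * a.*2 ^ nprimes_upper a).
Proof.
move=> a0; apply: leq_trans (central_binom_lb a) (leq_mul (leqnn _) _).
apply: leq_trans (central_binom_le_prod a0) _.
rewrite /erdos_factor !big_split /= !prod_if_const.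
by rewrite leq_mul2r leq_mul2l (leq_trans (prod_primes_third_le a)) ?primorial_le ?orbT.
Qed.

Lemma expn4 n : 4 ^ n = 2 ^ n.*2.
Proof. by rewrite -mul2n expnM. Qed.

Lemma erdos_exponent_le a : 0 < a ->
  a.*2 <= (trunc_log 2 a).+2 * (nprimes_sqrt a).+1 + (a.*2 %/ 3).*2
          + (trunc_log 2 a).+2 * nprimes_upper a.
Proof.
move=> a0; set t := (trunc_log 2 a).+2.
have two_a : a.*2.+1 <= 2 ^ t.
  by have := trunc_log_ltn a (ltnSn 1); rewrite /t !expnS; lia.
have pow_le e : a.*2 ^ e <= 2 ^ (t * e).
  by rewrite expnM; case: e => // e; rewrite leq_exp2r //; lia.
rewrite -(leq_exp2l _ _ (ltnSn 1)) -expn4.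
set S := nprimes_sqrt a; set N := nprimes_upper a; set q := a.*2 %/ 3.
have -> : 2 ^ (t * S.+1 + q.*2 + t * N) = 2 ^ t * 2 ^ (t * S) * 4 ^ q * 2 ^ (t * N).
  by rewrite expn4 -!expnD; congr (2 ^ _); ring.
apply: leq_trans (central_binom_erdos_le a0) _.
rewrite !mulnA; exact: leq_mul (leq_mul (leq_mul two_a (pow_le _)) (leqnn _)) (pow_le _).
Qed.

Lemma nprimes_sqrt_le a : 0 < a -> nprimes_sqrt a <= 2 ^ ((trunc_log 2 a)./2).+2.
Proof.
move=> a0; rewrite /nprimes_sqrt; set b := trunc_log 2 a; set u := b./2.
have hb : a < 2 ^ b.+1 := trunc_log_ltn a (ltnSn 1).
apply: leq_trans (sum1_nat_bounded (T := 2 ^ u.+2) _) _; last lia.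
move=> p _ /andP [_ hp]; rewrite ltnNge; apply/negP => h.
have : 2 ^ b.+2 <= 2 ^ (u.+2 + u.+2) by apply: leq_pexp2l => //; rewrite /u; lia.
rewrite expnD expnS; have := leq_mul h h; lia.
Qed.

Lemma poly_exp_le_exp_double u : 9 <= u ->
  3 * (u.*2 + 3) * (1 + 4 * 2 ^ u) <= 2 ^ u.*2.
Proof.
elim: u => // u IH hu; case: (ltnP u 9) => hu9; first by have -> : u = 8 by lia.
have := IH hu9; rewrite (_ : u.+1.*2 = u.*2.+2); last by lia.
by rewrite !expnS; set x := 2 ^ u; set y := 2 ^ u.*2; nia.
Qed.

Lemma chebyshev_lb a : 2 ^ 18 <= a -> a <= 6 * trunc_log 2 a * nprimes_upper a.
Proof.
move=> ha; have a0 : 0 < a by apply: leq_trans ha.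
set b := trunc_log 2 a; set u := b./2.
have hb : 2 ^ b <= a := trunc_logP (ltnSn 1) a0.
have b18 : 18 <= b by apply: trunc_log_max.
have u9 : 9 <= u by rewrite /u; lia.
have small_part : 3 * (b.+2 * (nprimes_sqrt a).+1) <= a.
  have : 3 * (b.+2 * (nprimes_sqrt a).+1) <= 3 * (u.*2 + 3) * (1 + 4 * 2 ^ u).
    rewrite -mulnA leq_mul2l /=; apply: leq_mul; first by rewrite /u; lia.
    by have := nprimes_sqrt_le a0; rewrite -/b -/u !expnS; lia.
  move/leq_trans; apply; apply: leq_trans (poly_exp_le_exp_double u9) _.
  by apply: leq_trans hb; apply: leq_pexp2l => //; rewrite /u; lia.
(* The primes below sqrt(2a) take at most a/3 of the exponent 2a, those below
   2a/3 at most 4a/3. *)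
have := erdos_exponent_le a0; rewrite -/b.
have := leq_divM a.*2 3; move: small_part.
set s := b.+2 * _; set N := nprimes_upper a; set q := a.*2 %/ 3; nia.
Qed.

(** * Residues of a set of integers modulo many primes *)

Local Open Scope ring_scope.

Definition residues (p : nat) (s : seq int) := undup [seq (x %% p%:Z)%Z | x <- s].

Fixpoint ncollisions (p : nat) (s : seq int) : nat :=
  if s is x :: r then (count (fun y : int => (p%:Z %| (y - x)%R)%Z) r + ncollisions p r)%N
  else 0%N.

Lemma size_le_residues_collisions p s :
  (size s <= size (residues p s) + ncollisions p s)%N.
Proof.
elim: s => //= x r; rewrite /residues /= => IH.
case: ifP => /= [/mapP [y yr e] | _]; last lia.
have : (0 < count (fun y : int => (p%:Z %| (y - x)%R)%Z) r)%N.
  by rewrite -has_count; apply/hasP; exists y; rewrite // -eqz_mod_dvd e.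
by set c := count _ _; lia.
Qed.

Lemma sum_ncollisions_le (P : seq nat) (s : seq int) L : uniq s ->
  (forall x y, x \in s -> y \in s -> x != y ->
     (count (fun p : nat => (p%:Z %| (y - x)%R)%Z) P <= L)%N) ->
  (\sum_(p <- P) ncollisions p s <= L * (size s * size s))%N.
Proof.
elim: s => [|x r IH] /=; first by rewrite big1.
move=> /andP [xr ur] hL; rewrite big_split /=.
have := IH ur (fun x' y' x'r y'r =>
  hL x' y' (mem_behead (s := x :: r) x'r) (mem_behead (s := x :: r) y'r)).
have : (\sum_(p <- P) count (fun y : int => (p%:Z %| (y - x)%R)%Z) r <= L * size r)%N.
  under eq_bigr => p _ do rewrite -sum1_count big_mkcond.
  rewrite exchange_big /= -[(L * _)%N]iter_addn_0 -(count_predT r) -big_const_seq.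
  rewrite big_seq_cond [X in (_ <= X)%N]big_seq_cond; apply: leq_sum => y /andP [yr _].
  rewrite -big_mkcond sum1_count /= hL ?mem_head ?in_cons ?yr ?orbT //.
  by apply: contraNneq xr => ->.
move=> hA hB; apply: leq_trans (leq_add hA hB) _.
by rewrite -mulnDr leq_mul2l mulSn mulnS; apply/orP; right; lia.
Qed.

Lemma count_prime_dvd_le (P : seq nat) b N d : uniq P ->
  (forall p, p \in P -> prime p /\ (2 ^ b <= p)%N) -> (0 < b)%N ->
  (0 < d <= 2 ^ N)%N -> (count (dvdn^~ d) P <= N %/ b)%N.
Proof.
move=> uP hP b0 /andP [d0 dN]; rewrite leq_divRL // mulnC.
rewrite -(leq_exp2l _ _ (ltnSn 1)) expnM; apply: leq_trans dN.
apply: leq_trans (dvdn_leq d0 (prod_primes_dvd uP (fun p pP pd => conj (proj1 (hP p pP)) pd))).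
rewrite -iter_muln_1 -big_const_seq big_seq_cond [X in (_ <= X)%N]big_seq_cond.
by apply: leq_prod => p /andP [/hP []].
Qed.

Lemma markov_count (P : seq nat) (f : nat -> nat) m :
  (count (fun p => m < 2 * f p)%N P * m.+1 <= 2 * \sum_(p <- P) f p)%N.
Proof.
elim: P => [|x r IH] /=; first by rewrite big_nil.
by rewrite big_cons; case: ltnP => h /=; lia.
Qed.

(* Few primes can merge many elements of s, since each difference has few large
   prime factors. *)
Lemma count_many_residues (P : seq nat) (s : seq int) b N : uniq P ->
  (forall p, p \in P -> prime p /\ (2 ^ b <= p)%N) -> (0 < b)%N -> uniq s ->
  {in s &, forall x y, (`|y - x| <= 2 ^ N)%N} ->
  (20 * (N %/ b) * size s <= size P)%N ->
  (9 * size P <= 10 * count (fun p => size s <= 2 * size (residues p s))%N P)%N.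
Proof.
move=> uP hP b0 us hs budget; set m := size s in budget *.
set bad := fun p => (m < 2 * ncollisions p s)%N.
have few_bad : (count bad P * m.+1 <= 2 * (N %/ b * (m * m)))%N.
  apply: leq_trans (markov_count P (ncollisions^~ s) m) _.
  rewrite leq_mul2l /=; apply: sum_ncollisions_le => // x y xs ys xy.
  rewrite (eq_count (a2 := dvdn^~ (absz (y - x)))) => [|p]; last by rewrite /= dvdzE absz_nat.
  by apply: count_prime_dvd_le => //; rewrite absz_gt0 subr_eq0 eq_sym xy hs.
have bad10 : (10 * count bad P <= size P)%N.
  have : (count bad P * m.+1 <= 2 * (N %/ b) * m * m.+1)%N.
    by apply: leq_trans few_bad _; rewrite -!mulnA !leq_mul2l leqnSn !orbT.
  by rewrite leq_pmul2r // => h; lia.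
have good : (count (predC bad) P <=
             count (fun p => m <= 2 * size (residues p s))%N P)%N.
  apply: sub_count => p; rewrite /= /bad -leqNgt => not_bad.
  have := size_le_residues_collisions p s; rewrite -/m.
  by move: (size (residues p s)) (ncollisions p s) not_bad => r c; lia.
by have := count_predC bad P; lia.
Qed.

(** * Subset sums and the sample space of primes *)

Lemma norm_wsub_le (Q : seq int) (B : nat) (A : {set 'I_(size Q)}) :
  (forall q, q \in Q -> `|q| <= B%:Z) -> `|wsub A| <= (size Q * B)%:Z.
Proof.
move=> hQ; apply: le_trans (ler_norm_sum _ _ _) _.
apply: le_trans (_ : _ <= \sum_(i in A) B%:Z) _.
  by apply: ler_sum => i _; apply/hQ/mem_nth.
rewrite sumr_const -mulr_natr natz -PoszM lez_nat mulnC leq_mul2r.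
by rewrite -[X in (_ <= X)%N]card_ord max_card orbT.
Qed.

Lemma wsub_dist_le (Q : seq int) e (A A' : {set 'I_(size Q)}) :
  (forall q, q \in Q -> `|q| <= (2 ^ e)%:Z) ->
  (`|wsub A' - wsub A| <= 2 ^ (size Q + e).+1)%N.
Proof.
move=> hQ; rewrite -lez_nat abszE; apply: le_trans (ler_normB _ _) _.
apply: le_trans (lerD (norm_wsub_le A' hQ) (norm_wsub_le A hQ)) _.
rewrite -PoszD lez_nat addnn doubleMl expnS expnD mulnA leq_mul2r -mul2n leq_mul2l.
by rewrite (ltnW (ltn_expl _ (ltnSn 1))) !orbT.
Qed.

Lemma norm_int_le_exp2 (R : realType) (c : R) (n : nat) (q : int) :
  `|(q%:~R : R)| <= 2 `^ (c * n%:R) ->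
  `|q| <= (2 ^ ((Num.truncn c).+1 * n))%:Z.
Proof.
move=> hq; rewrite -(ler_int R) intr_norm; apply: le_trans hq _.
change (2 `^ (c * n%:R) <= ((2 ^ ((Num.truncn c).+1 * n))%N)%:R).
rewrite natrX -powR_mulrn // natrM; apply: ler_powR; first by rewrite ler1n.
by apply: ler_wpM2r => //; apply/ltW/truncnS_gt.
Qed.

Lemma size_wpow Q : (size (wpow Q) <= 2 ^ size Q)%N.
Proof.
apply: leq_trans (size_undup _) _.
by rewrite size_map -cardE -cardsT -powersetT card_powerset cardsT card_ord.
Qed.

Lemma mem_wbinom Q k s : s \in wbinom Q k ->
  exists2 A : {set 'I_(size Q)}, #|A| = k & s = wsub A.
Proof. by rewrite mem_undup => /mapP [A]; rewrite mem_enum inE => /eqP; exists A. Qed.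

Lemma mem_kres Q k p (A : {set 'I_(size Q)}) : #|A| = k ->
  (wsub A %% p%:Z)%Z \in kres Q k p.
Proof. by move=> hA; rewrite mem_undup; apply/mapP; exists A; rewrite // mem_enum inE hA. Qed.

Lemma size_kres_gt0 Q k p : (k <= size Q)%N -> (0 < size (kres Q k p))%N.
Proof.
move=> kQ; have : (0 < #|[set A : {set 'I_(size Q)} | #|A| == k]|)%N.
  by rewrite card_draws card_ord bin_gt0.
rewrite card_gt0 => /set0Pn [A]; rewrite inE => /eqP /(mem_kres p).
by case: (kres Q k p).
Qed.

Lemma size_residues_le_kres Q k p (s : seq int) : {subset s <= wbinom Q k} ->
  (size (residues p s) <= size (kres Q k p))%N.
Proof.
move=> sS; apply: uniq_leq_size; first exact: undup_uniq.
move=> z; rewrite mem_undup => /mapP [x /sS /mem_wbinom [A hA ->] ->].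
exact: mem_kres.
Qed.

Lemma mem_primes_in (R : realType) (X : R) p : p \in primes_in X ->
  [/\ prime p, X / 2 <= p%:R & p%:R <= X].
Proof. by rewrite mem_filter => /andP [/andP [/andP [pp h1] h2] _]. Qed.

Lemma half_truncn_le_primes_in (R : realType) (X : R) p : p \in primes_in X ->
  (Num.truncn X %/ 2 <= p)%N.
Proof.
case/mem_primes_in => _ Xp _.
have : (Num.truncn X <= p.*2.+1)%N.
  rewrite truncn_le_nat; apply: le_lt_trans (_ : X <= p.*2%:R) _; last by rewrite ltr_nat.
  by rewrite ler_pdivrMr // in Xp; rewrite -muln2 natrM.
lia.
Qed.

Lemma sub_in_count (T : eqType) (a1 a2 : pred T) (s : seq T) :
  {in s, subpred a1 a2} -> (count a1 s <= count a2 s)%N.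
Proof.
elim: s => //= x s IH sub12; apply: leq_add.
  by case a1x: (a1 x) => //; rewrite sub12 ?mem_head.
by apply: IH => y ys; apply: sub12; rewrite inE ys orbT.
Qed.

Lemma nprimes_upper_le_size_primes_in (R : realType) (X : R) : 0 <= X ->
  (nprimes_upper (Num.truncn X %/ 2) <= size (primes_in X))%N.
Proof.
move=> X0; set M := Num.truncn X; set a := (M %/ 2)%N.
have XM : M%:R <= X by rewrite truncn_le.
have MX : X < M.+1%:R := truncnS_gt X.
rewrite /nprimes_upper sum1_count /index_iota subn0 /primes_in size_filter.
rewrite (_ : M.+1 = (a.*2.+1 + (M - a.*2))%N); last by rewrite /a; lia.
rewrite iotaD count_cat; apply: (leq_trans _ (leq_addr _ _)); apply: sub_in_count.
move=> p; rewrite mem_iota add0n => /andP [_ hp] /andP [pp ap]; rewrite pp /=.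
apply/andP; split; last by apply: le_trans XM; rewrite ler_nat /a; lia.
rewrite ler_pdivrMr //; apply: le_trans (ltW MX) _; rewrite -natrM ler_nat /a; lia.
Qed.

Lemma primes_in_all_good (R : realType) (C : R) n Q k (X : R) :
  0 < C -> (0 < n)%N -> (k <= size Q)%N -> X <= C * n%:R ^+ 2 ->
  [seq p <- primes_in X | p%:R / (C * n%:R ^+ 2) <= (size (kres Q k p))%:R]
    = primes_in X.
Proof.
move=> C0 n0 kQ XC; apply/all_filterP/allP => p /mem_primes_in [_ _ pX].
rewrite ler_pdivrMr ?mulr_gt0 ?exprn_gt0 ?ltr0n //.
apply: le_trans (le_trans pX XC) (ler_peMl _ _).
  by apply: mulr_ge0; [apply: ltW | apply: exprn_ge0].
by rewrite ler1n size_kres_gt0.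
Qed.

(* Here m := M %/ (D n^2) + 1 residues are sought among as many subset sums, and
   L := K n %/ b bounds the number of primes >= 2^b dividing a difference of two of them. *)
Lemma collision_budget_le K D n M : (0 < n)%N -> (0 < K)%N -> (720 * K <= D)%N ->
  (2 ^ 18 <= M %/ 2)%N -> (2 * (D * (n * n)) <= M)%N -> (M <= 2 ^ n)%N ->
  (20 * (K * n %/ trunc_log 2 (M %/ 2)) * (M %/ (D * (n * n))).+1
     <= nprimes_upper (M %/ 2))%N.
Proof.
move=> n0 K0 DK a18 Mq Mn; set a := (M %/ 2)%N; set b := trunc_log 2 a.
set q := (D * (n * n))%N; set L := (K * n %/ b)%N; set m := (M %/ q).+1.
have a0 : (0 < a)%N by apply: leq_trans a18.
have ab : (2 ^ b <= a)%N := trunc_logP (ltnSn 1) a0.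
have b0 : (0 < b)%N by apply: trunc_log_max => //; apply: leq_trans a18; rewrite leq_exp2l.
have bn : (b <= n)%N.
  by rewrite -(leq_exp2l _ _ (ltnSn 1)); apply: (leq_trans ab (leq_trans (leq_div _ _) Mn)).
have q0 : (0 < q)%N by rewrite /q !muln_gt0 n0 andbT; lia.
have Lb : (L * b <= K * n)%N := leq_divM _ _.
have mq : (m * q <= 2 * M)%N by rewrite mulSn; have := leq_divM M q; lia.
have Ma : (M <= 3 * a)%N by have := ltn_ceil M (ltn0Sn 1); rewrite /a; lia.
have cheb := chebyshev_lb a18; rewrite -/b in cheb.
rewrite -(leq_pmul2r (_ : 0 < b * q)%N); last by rewrite muln_gt0 b0.
apply: (@leq_trans (20 * (K * n) * (2 * (3 * (6 * b * nprimes_upper a))))).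
  rewrite (_ : _ * _ * _ * _ = 20 * (L * b) * (m * q))%N; last by ring.
  apply: leq_mul; first by rewrite leq_mul2l Lb orbT.
  apply: leq_trans mq _; rewrite leq_mul2l /=.
  by apply: leq_trans Ma _; rewrite leq_mul2l /=.
rewrite (_ : 20 * _ * _ = 720 * K * n * b * nprimes_upper a)%N; last by ring.
rewrite [X in (_ <= X)%N](_ : _ = D * n * n * b * nprimes_upper a)%N; last by rewrite /q; ring.
do 2 apply: leq_mul => //.
exact: leq_trans (leq_mul DK (leqnn n)) (leq_pmulr _ n0).
Qed.

Lemma succ_divn_le M q n s : (0 < n)%N -> (2 * n <= q)%N -> (2 * q <= M)%N ->
  (M <= s * n)%N -> ((M %/ q).+1 <= s)%N.
Proof.
move=> n0 nq qM Ms; rewrite -(leq_pmul2r n0); apply: leq_trans Ms.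
apply: leq_trans (leq_divM M q).
have : (1 <= M %/ q)%N by rewrite leq_divRL; lia.
by set t := (M %/ q)%N; nia.
Qed.

Lemma truncn_le_size_wbinom (R : realType) n Q k (X : R) :
  (0 < size Q <= n)%N -> X <= (size (wpow Q))%:R ->
  (size (wpow Q))%:R / (size Q)%:R <= (size (wbinom Q k))%:R :> R ->
  (Num.truncn X <= size (wbinom Q k) * n)%N.
Proof.
case/andP=> Q0 Qn hX; rewrite ler_pdivrMr ?ltr0n // => hS.
rewrite truncn_le_nat; apply: le_lt_trans (le_trans hX hS) _.
by rewrite -natrM ltr_nat ltnS leq_mul2l Qn orbT.
Qed.

Lemma truncn_le_exp2 (R : realType) n Q (X : R) : (size Q <= n)%N ->
  X <= (size (wpow Q))%:R -> (Num.truncn X <= 2 ^ n)%N.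
Proof.
move=> Qn hX; rewrite truncn_le_nat; apply: le_lt_trans hX _.
by rewrite ltr_nat ltnS (leq_trans (size_wpow Q)) // leq_pexp2l.
Qed.

Lemma size_kres_ge (R : realType) Q k p (s : seq int) q (x : R) :
  {subset s <= wbinom Q k} -> (size s <= 2 * size (residues p s))%N ->
  x <= (size s * q)%:R -> x <= (size (kres Q k p) * (2 * q))%:R.
Proof.
move=> sS s_res xs; apply: le_trans xs _; rewrite ler_nat mulnA leq_mul2r.
by rewrite (leq_trans s_res) ?orbT // mulnC leq_mul2r size_residues_le_kres ?orbT.
Qed.

Lemma many_good_primes (R : realType) (K D n : nat) (Q : seq int) (k : nat) (X : R) :
  (0 < K)%N -> (720 * K <= D)%N -> (2 ^ 18 <= D)%N -> (size Q <= n)%N ->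
  (0 < k <= size Q)%N ->
  (forall A A' : {set 'I_(size Q)}, `|wsub A' - wsub A| <= 2 ^ (K * n))%N ->
  (size (wpow Q))%:R / (size Q)%:R <= (size (wbinom Q k))%:R :> R ->
  X <= (size (wpow Q))%:R -> (2 * D)%:R * n%:R ^+ 2 < X ->
  (9 : R) / 10 * (size (primes_in X))%:R <=
    (size [seq p <- primes_in X |
             (p%:R : R) / ((2 * D)%:R * n%:R ^+ 2) <= (size (kres Q k p))%:R])%:R.
Proof.
move=> K0 DK D18 Qn /andP [k0 kQ] hdist hS hX hX2.
have n0 : (0 < n)%N by lia.
set M := Num.truncn X; set a := (M %/ 2)%N; set b := trunc_log 2 a; set P := primes_in X.
set q := (D * (n * n))%N; set s := take (M %/ q).+1 (wbinom Q k).
have q0 : (0 < q)%N by rewrite /q !muln_gt0 n0 andbT; lia.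
have X0 : 0 <= X by apply: le_trans (ltW hX2); rewrite mulr_ge0 ?exprn_ge0.
have MX : X < M.+1%:R := truncnS_gt X.
have Mq : (2 * q <= M)%N.
  rewrite -ltnS -(ltr_nat R); apply: le_lt_trans (lt_trans hX2 MX).
  by rewrite /q !natrM expr2 !mulrA.
have a18 : (2 ^ 18 <= a)%N by rewrite /a; have := leq_mul D18 (_ : 1 <= n * n)%N; lia.
have b0 : (0 < b)%N by apply: trunc_log_max => //; apply: leq_trans a18; rewrite leq_exp2l.
have s_size : size s = (M %/ q).+1.
  rewrite size_takel // (succ_divn_le n0 _ Mq) ?truncn_le_size_wbinom ?Qn //.
  - by rewrite /q; nia.
  - by rewrite (leq_trans k0 kQ).
have Xs : X <= (size s * q)%:R.
  by rewrite s_size ltW // (lt_le_trans MX) // ler_nat ltn_ceil.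
have sS : {subset s <= wbinom Q k} by move=> x; apply: mem_take.
have P_large p : p \in P -> prime p /\ (2 ^ b <= p)%N.
  move=> pP; have [pp _ _] := mem_primes_in pP; split => //.
  by apply: leq_trans (trunc_logP _ _) (half_truncn_le_primes_in pP); lia.
have hs : {in s &, forall x y, (`|y - x| <= 2 ^ (K * n))%N}.
  by move=> x y /sS /mem_wbinom [A _ ->] /sS /mem_wbinom [A' _ ->].
have budget : (20 * (K * n %/ b) * size s <= size P)%N.
  rewrite s_size; apply: leq_trans (nprimes_upper_le_size_primes_in X0).
  by apply: collision_budget_le => //; apply: truncn_le_exp2 hX.
have many : (9 : R) / 10 * (size P)%:R <=
    (count (fun p => size s <= 2 * size (residues p s))%N P)%:R.
  rewrite mulrAC ler_pdivrMr // -[9 : R]/(9%:R) -[10 : R]/(10%:R) -!natrM ler_nat.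
  rewrite [(_ * 10)%N]mulnC; apply: count_many_residues hs budget => //.
    exact/filter_uniq/iota_uniq.
  exact/take_uniq/undup_uniq.
rewrite size_filter; apply: le_trans many _; rewrite ler_nat; apply: sub_in_count.
move=> p /mem_primes_in [_ _ pX] /(size_kres_ge sS) /(_ Xs) kres_ge.
rewrite ler_pdivrMr; last by apply: mulr_gt0; [rewrite ltr0n; lia | rewrite exprn_gt0 ?ltr0n].
apply: le_trans pX (le_trans kres_ge _).
by rewrite -natrX -!natrM ler_nat /q; apply: eq_leq; ring.
Qed.

Theorem mainTheorem8 (R : realType) (c : R) (hc : 0 < c) :
  exists C : R, 0 < C /\
  forall (n : nat) (Q : seq int) (k : nat) (X : R),
    uniq Q ->
    (size Q <= n)%N ->
    (forall q, q \in Q -> `|(q%:~R : R)| <= 2 `^ (c * n%:R)) ->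
    (1 <= k <= size Q)%N ->
    (size (wpow Q))%:R / (size Q)%:R <= (size (wbinom Q k))%:R :> R ->
    4 <= X -> X <= (size (wpow Q))%:R ->
    ((9 : R) / 10) * (size (primes_in X))%:R <=
      (size [seq p <- primes_in X |
               (p%:R : R) / (C * n%:R ^+ 2) <= (size (kres Q k p))%:R])%:R :> R.
Proof.
(* |q| <= 2 ^ ((truncn c).+1 n) bounds differences of subset sums by 2 ^ (K n); D must dominate 720 K and 2 ^ 18 for collision_budget_le
   and chebyshev_lb. *)
pose K := (Num.truncn c).+3; pose D := (2 ^ 18 * K)%N.
have D_gt0 : (0 < D)%N by rewrite muln_gt0 expn_gt0.
exists (2 * D)%:R; split => [|n Q k X _ Qn hQ kQ hS _ hX]; first by rewrite ltr0n muln_gt0.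
have n_gt0 : (0 < n)%N by lia.
case: (lerP X ((2 * D)%:R * n%:R ^+ 2)) => hX2.
  rewrite primes_in_all_good ?ltr0n ?muln_gt0 //; last by case/andP: kQ.
  by rewrite ler_piMl // ler_pdivrMr // mul1r ler_nat.
apply: (@many_good_primes R K D) hS hX hX2 => //; first by rewrite /D leq_mul2r orbT.
- by rewrite /D leq_pmulr.
- move=> A A'; apply: leq_trans (wsub_dist_le A A' (fun q qQ => norm_int_le_exp2 (hQ q qQ))) _.
  by rewrite leq_exp2l //; lia.
Qed.
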